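(* Let $(G_n)$ be a sequence of graphs satisfying conditions (1')–(3') below, and let $A$ be the adjacency matrix of $G_n$. Then for all sufficiently large $n$, the matrix $\frac{1}{\delta-9\overline\lambda}A$ is doubly superstochastic.
   Context: $G_n$ has vertex set $V$, $|V|=n$, average degree $d$, minimum degree $\delta$, maximum degree $\Delta$. For $U,W\subseteq V$, $e(U,W)$ is the number of ordered pairs $(u,w)\in U\times W$ with $u$ adjacent to $w$. A number $\overline\lambda=\overline\lambda(n)>0$ is said to control the edge distribution of $G_n$ if for all $U,W\subseteq V$: $\left|e(U,W)-\frac{d}{n}|U||W|\right|\le\overline\lambda\sqrt{|U||W|}$. Conditions: there is such $\overline\lambda$ with (1') $\Delta-\delta\le\overline\lambda$; (2') $\frac{d}{\overline\lambda}/\log^2n\to\infty$; (3') $\log d\cdot\log\frac{d}{\overline\lambda}/\log n\to\infty$. A nonnegative square matrix $M$ is doubly superstochastic if there is a doubly stochastic matrix $B$ (nonnegative, all row and column sums equal to 1) with $B\le M$ entrywise. *)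

From HB Require Import structures.
From mathcomp Require Import all_boot all_order all_algebra.
From mathcomp Require Import all_classical all_reals all_analysis.
Set Implicit Arguments. Unset Strict Implicit. Unset Printing Implicit Defensive.
Import Order.TTheory GRing.Theory Num.Theory.
Local Open Scope ring_scope.

Definition simple_graph (n : nat) (G : rel 'I_n) : Prop :=
  symmetric G /\ irreflexive G.

Definition deg (n : nat) (G : rel 'I_n) (v : 'I_n) : nat := #|[set w | G v w]|.

Definition avg_deg (R : realType) (n : nat) (G : rel 'I_n) : R :=
  (\sum_(v : 'I_n) (deg G v)%:R) / n%:R.

Definition min_deg (n : nat) (G : rel 'I_n) : nat := \big[minn/n]_(v : 'I_n) deg G v.
Definition max_deg (n : nat) (G : rel 'I_n) : nat := \max_(v : 'I_n) deg G v.

Definition e_count (n : nat) (G : rel 'I_n) (U W : {set 'I_n}) : nat :=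
  #|[set p : 'I_n * 'I_n | [&& p.1 \in U, p.2 \in W & G p.1 p.2]]|.

Definition controls (R : realType) (n : nat) (G : rel 'I_n) (lam : R) : Prop :=
  forall U W : {set 'I_n},
    `| (e_count G U W)%:R - avg_deg R G / n%:R * #|U|%:R * #|W|%:R |
      <= lam * Num.sqrt (#|U|%:R * #|W|%:R).

Definition adjacency_matrix (R : realType) (n : nat) (G : rel 'I_n) : 'M[R]_n :=
  \matrix_(i, j) (G i j)%:R.

Definition doubly_stochastic (R : realType) (n : nat) (B : 'M[R]_n) : Prop :=
  (forall i j, 0 <= B i j) /\
  (forall i, \sum_j B i j = 1) /\
  (forall j, \sum_i B i j = 1).

Definition doubly_superstochastic (R : realType) (n : nat) (M : 'M[R]_n) : Prop :=
  (forall i j, 0 <= M i j) /\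
  exists B : 'M[R]_n, doubly_stochastic B /\ forall i j, B i j <= M i j.

From HB Require Import structures.
From mathcomp Require Import all_boot all_order all_algebra.
From mathcomp Require Import all_classical all_reals all_analysis.
From mathcomp Require Import ring lra.
Set Implicit Arguments. Unset Strict Implicit. Unset Printing Implicit Defensive.
Import Order.TTheory GRing.Theory Num.Theory.
Import numFieldNormedType.Exports.
Local Open Scope ring_scope.

(* A doubly stochastic B <= c A (c = (dmin - 9 lam)^-1) is a transportation plan
   with unit supplies on the rows, unit demands on the columns and capacities
   c A.  The proof is an
   induction on the support of C that either deletes an edge or splits the
   problem along a tight cut.
   For the graph, the cut condition reads e(S, T) >= (dmin - 9 lam)(|S|+|T|-n)
   for all vertex sets S, T.  It follows from the edge-distribution bound
   applied to (S, T) or to (S, V \ T), together with dmax - dmin <= lam, as soon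
   as d >= 30 lam; condition (2') guarantees the latter for large n. *)

Section SupplyDemand.
Variables (R : realFieldType) (I J : finType).
Implicit Types (a : I -> R) (b : J -> R) (C : I -> J -> R) (S : {set I}) (U : {set J}).

Definition transport C a b (B : I -> J -> R) : Prop :=
  [/\ forall i j, 0 <= B i j <= C i j, forall i, \sum_j B i j = a i
    & forall j, \sum_i B i j = b j].

Definition pairing a b C (wa : I -> R) (wb : J -> R) (wc : I -> J -> R) : R :=
  \sum_i wa i * a i + \sum_j wb j * b j + \sum_i \sum_j wc i j * C i j.

(* Slack of the cut (S, U): b(U) - a(S) + C(S, J \ U).  It must be nonnegative,
   since the supply of S can only go to U or across the edges from S to J \ U. *)
Definition slack C a b S U : R :=
  pairing a b C (fun i => - (i \in S)%:R) (fun j => (j \in U)%:R)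
    (fun i j => ((i \in S) && (j \notin U))%:R).

Definition cut_condition C a b : Prop := forall S U, 0 <= slack C a b S U.

Definition support_size C : nat := #|[set p : I * J | C p.1 p.2 != 0]|.

Lemma pairing_lin a b C wa wb wc wa1 wb1 wc1 wa2 wb2 wc2 wa3 wb3 wc3 :
  (forall i, wa i = wa1 i + wa2 i - wa3 i) ->
  (forall j, wb j = wb1 j + wb2 j - wb3 j) ->
  (forall i j, wc i j = wc1 i j + wc2 i j - wc3 i j) ->
  pairing a b C wa wb wc =
    pairing a b C wa1 wb1 wc1 + pairing a b C wa2 wb2 wc2 - pairing a b C wa3 wb3 wc3.
Proof.
move=> ha hb hc; rewrite /pairing.
have -> : \sum_i wa i * a i =
    \sum_i wa1 i * a i + \sum_i wa2 i * a i - \sum_i wa3 i * a i.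
  by rewrite -big_split -sumrB; apply: eq_bigr => i _ /=; rewrite ha; ring.
have -> : \sum_j wb j * b j =
    \sum_j wb1 j * b j + \sum_j wb2 j * b j - \sum_j wb3 j * b j.
  by rewrite -big_split -sumrB; apply: eq_bigr => j _ /=; rewrite hb; ring.
have -> : \sum_i \sum_j wc i j * C i j = \sum_i \sum_j wc1 i j * C i j
    + \sum_i \sum_j wc2 i j * C i j - \sum_i \sum_j wc3 i j * C i j.
  rewrite -big_split -sumrB; apply: eq_bigr => i _ /=.
  by rewrite -big_split -sumrB; apply: eq_bigr => j _ /=; rewrite hc; ring.
ring.
Qed.

Lemma sum_delta (T : finType) (t0 : T) (f : T -> R) :
  \sum_t (t == t0)%:R * f t = f t0.
Proof.
rewrite (bigD1 t0) //= eqxx mul1r big1 ?addr0 // => t /negbTE ->.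
by rewrite mul0r.
Qed.

Lemma transport_mono C C' a b B :
  (forall i j, C' i j <= C i j) -> transport C' a b B -> transport C a b B.
Proof.
move=> leC [hB ha hb]; split=> // i j.
by case/andP: (hB i j) => -> /le_trans ->.
Qed.

(* With no capacity, the cut condition forces a = b = 0. *)
Lemma transport_zero C a b : (forall i j, C i j = 0) ->
  \sum_i a i = \sum_j b j -> cut_condition C a b -> transport C a b (fun _ _ => 0).
Proof.
move=> C0 hab hcut.
have slackE S U :
    slack C a b S U = \sum_j (j \in U)%:R * b j - \sum_i (i \in S)%:R * a i.
  rewrite /slack /pairing (_ : \sum_i \sum_j _ = 0) ?addr0; last first.
    by apply: big1 => i _; apply: big1 => j _; rewrite C0 mulr0.
  by rewrite addrC -sumrN; congr (_ + _); apply: eq_bigr => i _; ring.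
have b_ge0 j : 0 <= b j.
  have := hcut finset.set0 [set j].
  rewrite slackE [X in _ - X]big1 ?subr0; last first.
    by move=> i _; rewrite inE mul0r.
  by rewrite (eq_bigr (fun k => (k == j)%:R * b k)) ?sum_delta // => k _; rewrite inE.
have a_le0 i : a i <= 0.
  have := hcut [set i] finset.set0.
  rewrite slackE [X in X - _]big1 ?sub0r ?oppr_ge0; last first.
    by move=> j _; rewrite inE mul0r.
  by rewrite (eq_bigr (fun k => (k == i)%:R * a k)) ?sum_delta // => k _; rewrite inE.
have sum_b0 : \sum_j b j = 0.
  by apply/eqP; rewrite eq_le sumr_ge0 // andbT -hab sumr_le0.
have b0 j : b j = 0 by apply: (psumr_eq0P _ sum_b0).
have a0 i : a i = 0.
  apply/eqP; rewrite -oppr_eq0; apply/eqP.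
  apply: (@psumr_eq0P _ _ predT (fun k => - a k)) => // [k _|].
    by rewrite oppr_ge0.
  by rewrite sumrN hab sum_b0 oppr0.
by split=> [i j|i|j]; rewrite ?C0 ?lexx // big1 ?a0 ?b0.
Qed.

Section LowerCapacity.
Variables (i0 : I) (j0 : J).

Definition lower C t : I -> J -> R :=
  fun i j => C i j - ((i == i0) && (j == j0))%:R * t.

Lemma lower_le C t i j : 0 <= t -> lower C t i j <= C i j.
Proof. by move=> t0; rewrite /lower lerBlDr lerDl mulr_ge0. Qed.

Lemma lower_ge0 C t : (forall i j, 0 <= C i j) -> 0 <= t <= C i0 j0 ->
  forall i j, 0 <= lower C t i j.
Proof.
move=> C0 /andP[t0 tC] i j; rewrite /lower.
by case: andP => [[/eqP -> /eqP ->]|_]; have := C0 i j; rewrite /=; lra.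
Qed.

Lemma lower_support C t i j : C i0 j0 != 0 -> lower C t i j != 0 -> C i j != 0.
Proof.
by rewrite /lower; case: andP => [[/eqP -> /eqP ->]|_]; rewrite ?mul0r ?subr0.
Qed.

Lemma slack_lower C a b t S U :
  slack (lower C t) a b S U = slack C a b S U - ((i0 \in S) && (j0 \notin U))%:R * t.
Proof.
rewrite /slack /pairing /lower.
have -> : \sum_i \sum_j ((i \in S) && (j \notin U))%:R *
      (C i j - ((i == i0) && (j == j0))%:R * t)
    = \sum_i \sum_j ((i \in S) && (j \notin U))%:R * C i j
    - \sum_i (i == i0)%:R * \sum_j (j == j0)%:R * (((i \in S) && (j \notin U))%:R * t).
  rewrite -sumrB; apply: eq_bigr => i _; rewrite mulr_sumr -sumrB.
  apply: eq_bigr => j _.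
  have -> : ((i == i0) && (j == j0))%:R = (i == i0)%:R * (j == j0)%:R :> R.
    by rewrite -natrM mulnb.
  ring.
have -> : \sum_i (i == i0)%:R *
      \sum_j (j == j0)%:R * (((i \in S) && (j \notin U))%:R * t)
    = ((i0 \in S) && (j0 \notin U))%:R * t.
  by under eq_bigr do rewrite sum_delta; rewrite sum_delta.
ring.
Qed.

Lemma cut_condition_lower C a b t :
  cut_condition C a b ->
  (forall S U, i0 \in S -> j0 \notin U -> t <= slack C a b S U) ->
  cut_condition (lower C t) a b.
Proof.
move=> hcut hmin S U; rewrite slack_lower.
case: (boolP (i0 \in S)) => [iS|_]; case: (boolP (j0 \notin U)) => [jU|_];
  rewrite /= ?mul1r ?mul0r ?subr0 ?subr_ge0 //.
exact: hmin.
Qed.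

End LowerCapacity.

Section TightCut.
Variables (C : I -> J -> R) (a : I -> R) (b : J -> R) (S : {set I}) (U : {set J}).

(* The residual problem of the cut (S, U): the edges from S to J \ U are
   saturated and their flow is removed from the supplies and demands, the edges
   from I \ S to U are dropped, and only the blocks S x U and (I \ S) x (J \ U)
   keep their capacities. *)
Definition cut_cap : I -> J -> R := fun i j => ((i \in S) == (j \in U))%:R * C i j.
Definition cut_supply : I -> R :=
  fun i => a i - (i \in S)%:R * \sum_j (j \notin U)%:R * C i j.
Definition cut_demand : J -> R :=
  fun j => b j - (j \notin U)%:R * \sum_i (i \in S)%:R * C i j.

Lemma cut_cap_ge0 : (forall i j, 0 <= C i j) -> forall i j, 0 <= cut_cap i j.
Proof. by move=> C0 i j; rewrite mulr_ge0. Qed.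

Lemma cut_balanced :
  \sum_i a i = \sum_j b j -> \sum_i cut_supply i = \sum_j cut_demand j.
Proof.
move=> hab; rewrite !sumrB hab; congr (_ - _).
under eq_bigr do rewrite mulr_sumr.
rewrite exchange_big /=; apply: eq_bigr => j _; rewrite mulr_sumr.
by apply: eq_bigr => i _; ring.
Qed.

Lemma slack_cut S' U' : slack cut_cap cut_supply cut_demand S' U' =
  pairing a b C (fun i => - (i \in S')%:R) (fun j => (j \in U')%:R)
  (fun i j => (i \in S')%:R * (i \in S)%:R * (j \notin U)%:R
     - (j \in U')%:R * (j \notin U)%:R * (i \in S)%:R
     + ((i \in S') && (j \notin U'))%:R * ((i \in S) == (j \in U))%:R).
Proof.
rewrite /slack /pairing /cut_supply /cut_demand /cut_cap.
have -> : \sum_i - (i \in S')%:R * (a i - (i \in S)%:R * \sum_j (j \notin U)%:R * C i j)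
  = \sum_i - (i \in S')%:R * a i
    + \sum_i \sum_j (i \in S')%:R * (i \in S)%:R * (j \notin U)%:R * C i j.
  rewrite -big_split; apply: eq_bigr => i _ /=.
  have -> : \sum_j (i \in S')%:R * (i \in S)%:R * (j \notin U)%:R * C i j
      = (i \in S')%:R * (i \in S)%:R * \sum_j (j \notin U)%:R * C i j.
    by rewrite mulr_sumr; apply: eq_bigr => j _; ring.
  ring.
have -> : \sum_j (j \in U')%:R * (b j - (j \notin U)%:R * \sum_i (i \in S)%:R * C i j)
  = \sum_j (j \in U')%:R * b j
    - \sum_i \sum_j (j \in U')%:R * (j \notin U)%:R * (i \in S)%:R * C i j.
  rewrite [X in _ = _ - X]exchange_big /= -sumrB; apply: eq_bigr => j _ /=.
  have -> : \sum_i (j \in U')%:R * (j \notin U)%:R * (i \in S)%:R * C i j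
      = (j \in U')%:R * (j \notin U)%:R * \sum_i (i \in S)%:R * C i j.
    by rewrite mulr_sumr; apply: eq_bigr => i _; ring.
  ring.
rewrite -!addrA; congr (_ + _); rewrite addrCA; congr (_ + _).
rewrite addrA -sumrB -big_split; apply: eq_bigr => i _ /=.
by rewrite -sumrB -big_split; apply: eq_bigr => j _ /=; ring.
Qed.

Lemma slack_cut_modular S' U' : slack cut_cap cut_supply cut_demand S' U' =
  slack C a b (S :|: S') (U :|: U') + slack C a b (S :&: S') (U :&: U')
  - slack C a b S U.
Proof.
rewrite slack_cut /slack; apply: pairing_lin => [i|j|i j]; rewrite !inE.
- by case: (i \in S); case: (i \in S'); rewrite /= ?mulr1n ?mulr0n; lra.
- by case: (j \in U); case: (j \in U'); rewrite /= ?mulr1n ?mulr0n; lra.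
- by case: (i \in S); case: (i \in S'); case: (j \in U); case: (j \in U');
    rewrite /= ?mulr1n ?mulr0n; lra.
Qed.

Lemma cut_condition_cut :
  cut_condition C a b -> slack C a b S U = 0 ->
  cut_condition cut_cap cut_supply cut_demand.
Proof. by move=> hcut tight S' U'; rewrite slack_cut_modular tight subr0 addr_ge0. Qed.

Lemma transport_cut_lift B : (forall i j, 0 <= C i j) ->
  transport cut_cap cut_supply cut_demand B ->
  transport C a b (fun i j => B i j + (i \in S)%:R * (j \notin U)%:R * C i j).
Proof.
move=> C0 [hB hrow hcol]; split=> [i j|i|j].
- have := hB i j; have := C0 i j; rewrite /cut_cap.
  by case: (i \in S); case: (j \in U); rewrite /= ?mulr1n ?mulr0n => h /andP[h1 h2];
    apply/andP; split; lra.
- rewrite big_split /= hrow /cut_supply.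
  have -> : \sum_j (i \in S)%:R * (j \notin U)%:R * C i j
      = (i \in S)%:R * \sum_j (j \notin U)%:R * C i j.
    by rewrite mulr_sumr; apply: eq_bigr => j _; ring.
  ring.
- rewrite big_split /= hcol /cut_demand.
  have -> : \sum_i (i \in S)%:R * (j \notin U)%:R * C i j
      = (j \notin U)%:R * \sum_i (i \in S)%:R * C i j.
    by rewrite mulr_sumr; apply: eq_bigr => i _; ring.
  ring.
Qed.

End TightCut.

Lemma support_size_lt C C' i0 j0 : (forall i j, C' i j != 0 -> C i j != 0) ->
  C' i0 j0 = 0 -> C i0 j0 != 0 -> (support_size C' < support_size C)%N.
Proof.
move=> sub0 C'0 C0; apply: proper_card; apply/fintype.properP; split.
  by apply/fintype.subsetP => p; rewrite !inE; apply: sub0.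
by exists (i0, j0); rewrite !inE /= ?C'0 ?eqxx.
Qed.

Definition solvable_below (m : nat) : Prop :=
  forall C a b, (support_size C < m)%N -> (forall i j, 0 <= C i j) ->
    \sum_i a i = \sum_j b j -> cut_condition C a b -> exists B, transport C a b B.

(* If no cut separating i0 from j0 has slack below C i0 j0, the edge (i0, j0)
   can be deleted, leaving a smaller support. *)
Lemma delete_edge_step C a b i0 j0 : solvable_below (support_size C) ->
  (forall i j, 0 <= C i j) -> \sum_i a i = \sum_j b j -> cut_condition C a b ->
  C i0 j0 != 0 ->
  (forall S U, i0 \in S -> j0 \notin U -> C i0 j0 <= slack C a b S U) ->
  exists B, transport C a b B.
Proof.
move=> IH C0 hab hcut C0ne hmin.
have [B hB] : exists B, transport (lower i0 j0 C (C i0 j0)) a b B.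
  apply: IH => //.
  - apply: (support_size_lt (i0 := i0) (j0 := j0) _ _ C0ne).
      by move=> i j; apply: lower_support C0ne.
    by rewrite /lower !eqxx mul1r subrr.
  - by apply: lower_ge0; rewrite // C0 lexx.
  - exact: cut_condition_lower.
by exists B; apply: transport_mono hB => i j; apply: lower_le.
Qed.

(* If the cut (S, U) separating i0 from j0 has the least such slack s, and
   s < C i0 j0, lowering (i0, j0) by s makes (S, U) tight; its residual problem
   has lost the edge (i0, j0), and its solution lifts back. *)
Lemma tight_cut_step C a b i0 j0 S U : solvable_below (support_size C) ->
  (forall i j, 0 <= C i j) -> \sum_i a i = \sum_j b j -> cut_condition C a b ->
  i0 \in S -> j0 \notin U -> slack C a b S U < C i0 j0 ->
  (forall S' U', i0 \in S' -> j0 \notin U' -> slack C a b S U <= slack C a b S' U') ->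
  exists B, transport C a b B.
Proof.
move=> IH C0 hab hcut i0S j0U sC hmin.
have C0ne : C i0 j0 != 0 by rewrite gt_eqF // (le_lt_trans (hcut S U)).
set C' := lower i0 j0 C (slack C a b S U).
have C'0 : forall i j, 0 <= C' i j by apply: lower_ge0; rewrite // hcut ltW.
have tight : slack C' a b S U = 0 by rewrite slack_lower i0S j0U mul1r subrr.
have [B hB] : exists B, transport (cut_cap C' S U) (cut_supply C' a S U)
    (cut_demand C' b S U) B.
  apply: IH.
  - apply: (support_size_lt (i0 := i0) (j0 := j0) _ _ C0ne).
      move=> i j; rewrite /cut_cap mulf_eq0 negb_or => /andP[_].
      exact: lower_support C0ne.
    by rewrite /cut_cap i0S (negbTE j0U) mul0r.
  - exact: cut_cap_ge0.
  - exact: cut_balanced.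
  - by apply: cut_condition_cut tight; apply: cut_condition_lower.
exists (fun i j => B i j + (i \in S)%:R * (j \notin U)%:R * C' i j).
apply: transport_mono (transport_cut_lift C'0 hB) => i j.
by apply: lower_le; apply: hcut.
Qed.

(* By induction on
   the support of C: for an edge (i0, j0) of the support, take a cut (S, U)
   separating i0 from j0 with least slack and apply one of the two steps. *)
Theorem supply_demand C a b : (forall i j, 0 <= C i j) ->
  \sum_i a i = \sum_j b j -> cut_condition C a b -> exists B, transport C a b B.
Proof.
move: {2}(support_size C) (erefl (support_size C)) => m.
elim/ltn_ind: m C a b => m IH C a b szC C0 hab hcut.
have IH' : solvable_below (support_size C).
  by rewrite szC => C' a' b' lt_m; apply: IH lt_m _ _ _ erefl.
case: (pickP (fun p : I * J => C p.1 p.2 != 0)) => [[i0 j0] /= C0ne|none]; last first.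
  exists (fun _ _ => 0); apply: transport_zero => // i j.
  by apply/eqP/negbFE/(none (i, j)).
pose separating (p : {set I} * {set J}) := (i0 \in p.1) && (j0 \notin p.2).
have sep_init : separating ([set i0], finset.set0) by rewrite /separating !inE eqxx.
have [[S U] /andP[/= i0S j0U] minSU] :=
  @arg_minP _ _ _ _ separating (fun p => slack C a b p.1 p.2) sep_init.
have hmin S' U' : i0 \in S' -> j0 \notin U' -> slack C a b S U <= slack C a b S' U'.
  by move=> i0S' j0U'; apply: (minSU (S', U')); rewrite /separating i0S' j0U'.
case: (leP (C i0 j0) (slack C a b S U)) => [Cs|sC].
  apply: delete_edge_step IH' C0 hab hcut C0ne _ => S' U' i0S' j0U'.
  exact: le_trans Cs (hmin S' U' i0S' j0U').
exact: tight_cut_step IH' C0 hab hcut i0S j0U sC hmin.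
Qed.

End SupplyDemand.

(* Two purely arithmetic estimates behind the cut bound e(S,T) >= (dmin - 9 lam)
   (|S| + |T| - N) for a graph on N vertices with |S| + |T| > N.  Write
   a = |S|, b = |T| and x = N - b = |V \ T|. *)

(* When T misses few vertices (x <= 9 (a - x)) or S is small (4 a <= N): bound
   e(S, V \ T) from above by dmax x or by the edge distribution, and subtract it
   from the volume of S, which is at least dmin a. *)
Lemma cut_bound_small_complement (R : realFieldType)
    (N a x dmin dmax d lam e e' vol sq : R) :
  0 < N -> 0 < lam -> 0 <= x -> x < a -> a <= N ->
  e + e' = vol -> dmin * a <= vol -> e' <= dmax * x ->
  e' <= d / N * a * x + lam * sq -> sq <= a ->
  d <= dmax -> dmax - dmin <= lam -> 30 * lam <= d ->
  x <= 9 * (a - x) \/ 4 * a <= N -> (dmin - 9 * lam) * (a - x) <= e.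
Proof.
move=> N0 lam0 x0 xa aN vol_e vol_ge e'_dmax e'_disc sq_a d_dmax dmax_dmin d30.
case=> [small_x|small_a].
  have p1 : 0 <= (lam - (dmax - dmin)) * x by rewrite mulr_ge0 // subr_ge0.
  have p2 : 0 <= lam * (9 * (a - x) - x) by rewrite mulr_ge0 ?subr_ge0 // ltW.
  nra.
have aN4 : a / N <= 1 / 4 by rewrite ler_pdivrMr //; lra.
have p1 : 0 <= d * x * (1 / 4 - a / N) by rewrite !mulr_ge0 ?subr_ge0 //; lra.
have p2 : d / N * a * x = d * x * (a / N) by rewrite mulrC !mulrA; ring.
have p3 : 0 <= x * (dmin + lam - d) by rewrite mulr_ge0 //; lra.
have p4 : 0 <= lam * (a - x) by rewrite mulr_ge0 //; lra.
have p5 : 0 <= x * (3 * dmin - 5 * lam) by rewrite mulr_ge0 //; lra.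
have p6 : 0 <= lam * (a - sq) by rewrite mulr_ge0 //; lra.
nra.
Qed.

(* When S and T are both large and both miss many vertices, the expected count
   d a b / N exceeds the target by a multiple of d N, which absorbs the error
   term lam sqrt(a b) <= lam N. *)
Lemma cut_bound_balanced (R : realFieldType) (N a b d dmin lam e sq : R) :
  0 < N -> 0 < lam -> a <= N -> b <= N -> 0 < a + b - N ->
  N < 4 * a -> N < 4 * b ->
  9 * (a + b - N) < N - b -> 9 * (a + b - N) < N - a ->
  d / N * a * b - lam * sq <= e -> sq <= N -> dmin <= d -> 30 * lam <= d ->
  (dmin - 9 * lam) * (a + b - N) <= e.
Proof.
move=> N0 lam0 aN bN k0 a4 b4 kb ka e_disc sqN dmin_d d30.
set dN := d / N.
have d_dN : d = dN * N by rewrite /dN mulfVK // gt_eqF.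
have dN0 : 0 <= dN by rewrite /dN divr_ge0 //; lra.
have prod_ge : (9 * N / 40) * (9 * N / 40) <= (N - b) * (N - a).
  by apply: ler_pM; lra.
have h1 : dN * ((9 * N / 40) * (9 * N / 40)) <= dN * ((N - b) * (N - a)).
  exact: ler_wpM2l.
have split_ab : dN * a * b = dN * N * (a + b - N) + dN * ((N - b) * (N - a)).
  by ring.
have h2 : lam * sq <= lam * N by apply: ler_wpM2l => //; lra.
have h3 : 0 <= lam * N by apply: mulr_ge0; lra.
have h4 : dmin * (a + b - N) <= d * (a + b - N) by apply: ler_wpM2r => //; lra.
rewrite -/dN in e_disc; rewrite d_dN in d30 h4.
nra.
Qed.

Section GraphCuts.
Variables (R : realType) (n : nat) (G : rel 'I_n).
Implicit Types S T : {set 'I_n}.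

Definition edges (S T : {set 'I_n}) : R :=
  \sum_i \sum_j ((i \in S) && (j \in T))%:R * (G i j)%:R.

Definition vol (S : {set 'I_n}) : R := \sum_i (i \in S)%:R * (deg G i)%:R.

Lemma e_countE S T : (e_count G S T)%:R = edges S T.
Proof.
rewrite /edges pair_bigA /e_count -sum1_card big_mkcond /= natr_sum.
apply: eq_bigr => p _; rewrite inE.
by case: (p.1 \in S); case: (p.2 \in T); case: (G p.1 p.2);
  rewrite /= ?mulr1 ?mulr0 ?mul0r.
Qed.

Lemma degE v : (deg G v)%:R = \sum_j (G v j)%:R :> R.
Proof.
rewrite /deg -sum1_card big_mkcond /= natr_sum.
by apply: eq_bigr => j _; rewrite inE; case: (G v j).
Qed.

Lemma sum_indicator (S : {set 'I_n}) : \sum_i (i \in S)%:R = #|S|%:R :> R.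
Proof.
rewrite -sum1_card natr_sum [RHS]big_mkcond /=.
by apply: eq_bigr => j _; case: (j \in S).
Qed.

Lemma edges_ge0 S T : 0 <= edges S T.
Proof. by apply: sumr_ge0 => i _; apply: sumr_ge0 => j _; rewrite mulr_ge0. Qed.

Lemma edges_split S T : edges S T + edges S (~: T) = vol S.
Proof.
rewrite /edges /vol -big_split; apply: eq_bigr => i _ /=.
rewrite -big_split degE mulr_sumr; apply: eq_bigr => j _ /=.
by rewrite inE; case: (i \in S); case: (j \in T); rewrite /= ?mulr1n ?mulr0n; ring.
Qed.

Lemma min_deg_le v : (min_deg G <= deg G v)%N.
Proof. by rewrite /min_deg -minEnat; apply: (@bigmin_le _ nat). Qed.

Lemma max_deg_ge v : (deg G v <= max_deg G)%N.
Proof. exact: leq_bigmax. Qed.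

Lemma vol_ge S : (min_deg G)%:R * #|S|%:R <= vol S.
Proof.
rewrite /vol -sum_indicator mulr_sumr; apply: ler_sum => i _.
by case: (i \in S); rewrite /= ?mulr1n ?mulr0n ?mulr1 ?mul1r ?mul0r ?ler_nat ?min_deg_le.
Qed.

Lemma vol_le S : vol S <= (max_deg G)%:R * #|S|%:R.
Proof.
rewrite /vol -sum_indicator mulr_sumr; apply: ler_sum => i _.
by case: (i \in S); rewrite /= ?mulr1n ?mulr0n ?mulr1 ?mul1r ?mul0r ?ler_nat ?max_deg_ge.
Qed.

Hypothesis Gsym : symmetric G.

Lemma edges_sym S T : edges S T = edges T S.
Proof.
rewrite /edges exchange_big; apply: eq_bigr => i _; apply: eq_bigr => j _ /=.
by rewrite Gsym andbC.
Qed.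

Lemma edges_le_vol S T : edges S T <= vol T.
Proof.
rewrite edges_sym /edges; apply: ler_sum => i _; rewrite degE mulr_sumr.
apply: ler_sum => j _; rewrite Gsym.
by case: (i \in T); case: (j \in S); case: (G j i);
  rewrite /= ?mulr1n ?mulr0n ?mulr1 ?mulr0.
Qed.

Variable lam : R.
Hypotheses (n_gt0 : (0 < n)%N) (lam_gt0 : 0 < lam) (ctrl : controls G lam).
Hypotheses (spread : (max_deg G)%:R - (min_deg G)%:R <= lam)
  (dense : 30 * lam <= avg_deg R G).

Let N : R := n%:R.
Let dmin : R := (min_deg G)%:R.
Let dmax : R := (max_deg G)%:R.
Let d : R := avg_deg R G.

Lemma N_gt0 : 0 < N. Proof. by rewrite /N ltr0n. Qed.

Lemma vol_setT : vol [set: 'I_n] = \sum_v (deg G v)%:R.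
Proof. by apply: eq_bigr => i _; rewrite inE mul1r. Qed.

Lemma card_setT : #|[set: 'I_n]|%:R = N.
Proof. by rewrite cardsT card_ord. Qed.

Lemma dmin_le_d : dmin <= d.
Proof.
have := vol_ge [set: 'I_n]; rewrite vol_setT card_setT => h.
by rewrite /d /avg_deg ler_pdivlMr ?N_gt0.
Qed.

Lemma d_le_dmax : d <= dmax.
Proof.
have := vol_le [set: 'I_n]; rewrite vol_setT card_setT => h.
by rewrite /d /avg_deg ler_pdivrMr ?N_gt0.
Qed.

Lemma card_le_N (S : {set 'I_n}) : #|S|%:R <= N.
Proof. by rewrite /N ler_nat; apply: leq_trans (max_card _) _; rewrite card_ord. Qed.

Lemma card_setC (S : {set 'I_n}) : #|~: S|%:R = N - #|S|%:R.
Proof. by apply/eqP; rewrite eq_sym subr_eq addrC -natrD (cardsC S) card_ord. Qed.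

Lemma discrepancy (S T : {set 'I_n}) :
  `| edges S T - d / N * #|S|%:R * #|T|%:R | <= lam * Num.sqrt (#|S|%:R * #|T|%:R).
Proof. by rewrite -e_countE; apply: ctrl. Qed.

(* The scaling factor is well defined: dmin - 9 lam >= 20 lam > 0. *)
Lemma dmin_lam_gt0 : 0 < dmin - 9 * lam.
Proof. by move: d_le_dmax spread dense lam_gt0; rewrite /dmin /dmax /d; lra. Qed.

(* Cut bound, first regime: apply the edge distribution to (S, V \ T). *)
Lemma cut_bound_complement (S T : {set 'I_n}) :
  0 < #|S|%:R + #|T|%:R - N ->
  N - #|T|%:R <= 9 * (#|S|%:R + #|T|%:R - N) \/ 4 * #|S|%:R <= N ->
  (dmin - 9 * lam) * (#|S|%:R + #|T|%:R - N) <= edges S T.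
Proof.
set a : R := #|S|%:R; set b : R := #|T|%:R => k0 regime.
have aN : a <= N := card_le_N S; have bN : b <= N := card_le_N T.
have [_ disc] : - (lam * Num.sqrt (a * (N - b))) <= edges S (~: T) - d / N * a * (N - b)
    /\ edges S (~: T) - d / N * a * (N - b) <= lam * Num.sqrt (a * (N - b)).
  by apply/andP; rewrite -ler_norml -(card_setC T) discrepancy.
have sq_a : Num.sqrt (a * (N - b)) <= a.
  apply: le_trans (ler_wsqrtr (_ : _ <= a ^+ 2)) _.
    by rewrite expr2 ler_wpM2l ?ler0n //; lra.
  by rewrite sqrtr_sqr ger0_norm // /a ler0n.
have e'_dmax : edges S (~: T) <= dmax * (N - b).
  by apply: le_trans (edges_le_vol _ _) _; rewrite -card_setC; apply: vol_le.
rewrite (_ : a + b - N = a - (N - b)); last by ring.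
apply: (cut_bound_small_complement N_gt0 lam_gt0 _ _ aN (edges_split S T) (vol_ge S))
  e'_dmax _ sq_a d_le_dmax spread dense _ => //; lra.
Qed.

(* Cut bound, second regime: apply the edge distribution to (S, T) itself. *)
Lemma cut_bound_direct (S T : {set 'I_n}) :
  0 < #|S|%:R + #|T|%:R - N -> N < 4 * #|S|%:R -> N < 4 * #|T|%:R ->
  9 * (#|S|%:R + #|T|%:R - N) < N - #|T|%:R ->
  9 * (#|S|%:R + #|T|%:R - N) < N - #|S|%:R ->
  (dmin - 9 * lam) * (#|S|%:R + #|T|%:R - N) <= edges S T.
Proof.
set a : R := #|S|%:R; set b : R := #|T|%:R => k0 a4 b4 kb ka.
have aN : a <= N := card_le_N S; have bN : b <= N := card_le_N T.
have [disc _] : - (lam * Num.sqrt (a * b)) <= edges S T - d / N * a * b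
    /\ edges S T - d / N * a * b <= lam * Num.sqrt (a * b).
  by apply/andP; rewrite -ler_norml discrepancy.
have sqN : Num.sqrt (a * b) <= N.
  apply: le_trans (ler_wsqrtr (_ : _ <= N ^+ 2)) _.
    by rewrite expr2 ler_pM // /a /b ler0n.
  by rewrite sqrtr_sqr ger0_norm // ltW // N_gt0.
apply: (cut_bound_balanced N_gt0 lam_gt0 aN bN) sqN dmin_le_d dense => //; lra.
Qed.

(* The cut bound e(S,T) >= (dmin - 9 lam)(|S| + |T| - N) for all S, T; by
   symmetry of e the regimes of cut_bound_complement (for S, T or T, S) and
   cut_bound_direct cover all cases. *)
Lemma cut_lower_bound (S T : {set 'I_n}) :
  (dmin - 9 * lam) * (#|S|%:R + #|T|%:R - N) <= edges S T.
Proof.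
set a : R := #|S|%:R; set b : R := #|T|%:R.
have c0 := dmin_lam_gt0.
have [k_le0|k0] := leP (a + b - N) 0.
  by apply: le_trans (edges_ge0 _ _); rewrite pmulr_rle0.
have [regS|notS] := boolP ((N - b <= 9 * (a + b - N)) || (4 * a <= N)).
  by apply: cut_bound_complement => //; apply/orP.
have [regT|notT] := boolP ((N - a <= 9 * (b + a - N)) || (4 * b <= N)).
  rewrite edges_sym (addrC a b).
  apply: cut_bound_complement; first by rewrite (addrC b a).
  by apply/orP.
move: notS notT; rewrite !negb_or -!ltNge => /andP[ka b4] /andP[kb a4].
by apply: cut_bound_direct => //; lra.
Qed.

(* Hence the cut condition holds for supplies and demands 1 and capacities
   c A with c = (dmin - 9 lam)^-1, and Gale's theorem gives B <= c A. *)
Lemma scaled_adjacency_superstochastic :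
  doubly_superstochastic ((dmin - 9 * lam)^-1 *: adjacency_matrix R G).
Proof.
have c0 := dmin_lam_gt0; set c := (dmin - 9 * lam)^-1.
have c_gt0 : 0 < c by rewrite invr_gt0.
have cap0 i j : 0 <= c * (G i j)%:R by rewrite mulr_ge0 // ltW.
split=> [i j|]; first by rewrite !mxE.
have cut : cut_condition (fun i j => c * (G i j)%:R) (fun=> 1) (fun=> 1).
  move=> S U; have := cut_lower_bound S (~: U); rewrite card_setC => bound.
  have supply : \sum_i - (i \in S)%:R * 1 = - #|S|%:R :> R.
    by rewrite -sum_indicator -sumrN; apply: eq_bigr => i _; rewrite mulr1.
  have demand : \sum_j (j \in U)%:R * 1 = #|U|%:R :> R.
    by rewrite -sum_indicator; apply: eq_bigr => j _; rewrite mulr1.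
  have flow : \sum_i \sum_j ((i \in S) && (j \notin U))%:R * (c * (G i j)%:R)
      = c * edges S (~: U).
    rewrite /edges mulr_sumr; apply: eq_bigr => i _; rewrite mulr_sumr.
    by apply: eq_bigr => j _; rewrite inE; ring.
  have : #|S|%:R + (N - #|U|%:R) - N <= c * edges S (~: U).
    by rewrite /c mulrC ler_pdivlMr // mulrC.
  rewrite /slack /pairing supply demand flow; lra.
have [B [B_cap B_row B_col]] := supply_demand cap0 erefl cut.
exists (\matrix_(i, j) B i j); split; last first.
  by move=> i j; rewrite !mxE; case/andP: (B_cap i j).
split=> [i j|]; first by rewrite mxE; case/andP: (B_cap i j).
split=> [i|j].
- by rewrite -(B_row i); apply: eq_bigr => j _; rewrite mxE.
- by rewrite -(B_col j); apply: eq_bigr => i _; rewrite mxE.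
Qed.

End GraphCuts.

(* Once n >= e, (ln n)^2 >= 1, so a ratio d / lam / (ln n)^2 of at least 30
   yields d >= 30 lam; this is all that condition (2') is needed for. *)
Lemma dense_of_log_ratio (R : realType) (x d lam : R) :
  expR 1 <= x -> 0 < lam -> 30 <= d / lam / ln x ^+ 2 -> 30 * lam <= d.
Proof.
move=> x_ge_e lam0 ratio.
have x0 : 0 < x := lt_le_trans (expR_gt0 1) x_ge_e.
have ln_ge1 : 1 <= ln x by rewrite -[X in X <= _](expRK 1) ler_ln ?posrE.
have ln2_ge1 : 1 <= ln x ^+ 2 by rewrite expr2; nra.
rewrite ler_pdivlMr ?(lt_le_trans ltr01 ln2_ge1) // ler_pdivlMr // in ratio.
nra.
Qed.

Local Open Scope classical_set_scope.

Theorem corollary1 (R : realType) (G : forall n : nat, rel 'I_n) (lam : nat -> R)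
  (Hsimple : forall n, simple_graph (G n))
  (Hpos : forall n, 0 < lam n)
  (Hctrl : forall n, controls (G n) (lam n))
  (H1 : forall n, (max_deg (G n))%:R - (min_deg (G n))%:R <= lam n)
  (H2 : (fun n : nat => avg_deg R (G n) / lam n / (ln (n%:R : R)) ^+ 2) @ \oo --> +oo)
  (H3 : (fun n : nat => ln (avg_deg R (G n)) * ln (avg_deg R (G n) / lam n)
                          / ln (n%:R : R)) @ \oo --> +oo) :
  \forall n \near \oo,
    doubly_superstochastic
      (((min_deg (G n))%:R - 9 * lam n)^-1 *: adjacency_matrix R (G n)).
Proof.
move/cvgryPge: H2 => H2.
near=> n.
have [Gsym _] := Hsimple n.
have n_ge_e : expR 1 <= (n%:R : R) by near: n; apply: nbhs_infty_ger.
have ratio : 30 <= avg_deg R (G n) / lam n / ln (n%:R : R) ^+ 2.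
  by near: n; apply: H2.
apply: (scaled_adjacency_superstochastic Gsym _ (Hpos n) (Hctrl n) (H1 n)).
- by rewrite -(ltr0n R); apply: lt_le_trans (expR_gt0 1) n_ge_e.
- exact: dense_of_log_ratio n_ge_e (Hpos n) ratio.
Unshelve. all: by end_near.
Qed.
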